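(* There is no novel partition of length $3$.
   Context: An integer partition is $\lambda=(\lambda_1,\dots,\lambda_k)$ with integers $\lambda_1\ge\dots\ge\lambda_k\ge 1$; $k$ is its length. For $v\in\mathbb{Z}^k$ let $v^{\perp B}=\{x\in\{-1,1\}^k: v\cdot x=0\}$; $\lambda^{\perp B}$ is this set for $(\lambda_1,\dots,\lambda_k)$. $V_\lambda\subset\mathbb{Z}^k$ is the set of vectors obtained from $(\lambda_1,\dots,\lambda_k)$ by permuting coordinates and changing signs of some coordinates, with first coordinate positive. For $I\subset\{1,\dots,m\}$, $\mathrm{Proj}_I:\{-1,1\}^m\to\{-1,1\}^{|I|}$ keeps the coordinates indexed by $I$. Reduction: for partitions $\mu$ of length $m$ and $\lambda$ of length $k\le m$, $\mu\Rightarrow\lambda$ iff there exist $I\subset\{1,\dots,m\}$, $|I|=k$, and $v\in V_\lambda$ with $\mathrm{Proj}_I(\mu^{\perp B})\subset v^{\perp B}$. $\mu$ strictly reduces to $\lambda$ iff $\mu\Rightarrow\lambda$ and not $\lambda\Rightarrow\mu$. Partitions $\lambda,\mu$ of the same length are equivalent iff there is $w\in V_\mu$ with $\lambda^{\perp B}=w^{\perp B}$. A partition $\lambda$ is novel iff $\lambda^{\perp B}\neq\emptyset$, $\lambda$ strictly reduces to no partition, and $\lambda$ is lexicographically smallest among partitions equivalent to it. *)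

From HB Require Import structures.
From mathcomp Require Import all_boot all_order all_algebra.
Set Implicit Arguments. Unset Strict Implicit. Unset Printing Implicit Defensive.
Import Order.TTheory GRing.Theory Num.Theory.

Definition is_partition (l : seq nat) : bool :=
  sorted geq l && all (fun a => 0 < a)%N l.

(* Sign vectors in {-1,1}^k are encoded as boolean sequences of size k:
   true stands for +1 and false for -1. *)
Fixpoint dotB (v : seq int) (x : seq bool) : int :=
  match v, x with
  | a :: v', b :: x' => ((if b then a else - a) + dotB v' x')%R
  | _, _ => 0%R
  end.

Definition perpB (v : seq int) (x : seq bool) : bool :=
  (size x == size v) && (dotB v x == 0%R).

Definition lamZ (l : seq nat) : seq int := map Posz l.

Definition inV (l : seq nat) (v : seq int) : Prop :=
  exists p : seq nat, perm_eq p l /\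
  exists e : seq bool, size e = size l /\
    v = map (fun ab : nat * bool => if ab.2 then Posz ab.1 else (- Posz ab.1)%R)
            (zip p e) /\
    (0 < head 0%R v)%R.

(* mu => lambda.  The subset I of {1..m} with |I| = k is encoded as a bit mask
   of size m with k true entries; Proj_I is then [mask I]. *)
Definition reduces (mu l : seq nat) : Prop :=
  (size l <= size mu)%N /\
  exists I : seq bool, size I = size mu /\ count id I = size l /\
  exists v : seq int, inV l v /\
    forall x : seq bool, perpB (lamZ mu) x -> perpB v (mask I x).

Definition strictly_reduces (mu l : seq nat) : Prop :=
  reduces mu l /\ ~ reduces l mu.

Definition equivalent (l mu : seq nat) : Prop :=
  size l = size mu /\
  exists w : seq int, inV mu w /\
    forall x : seq bool, perpB (lamZ l) x = perpB w x.

Fixpoint lexleq (s t : seq nat) : bool :=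
  match s, t with
  | [::], _ => true
  | _ :: _, [::] => false
  | a :: s', b :: t' => (a < b)%N || ((a == b) && lexleq s' t')
  end.

Definition novel (l : seq nat) : Prop :=
  is_partition l /\
  (exists x : seq bool, perpB (lamZ l) x) /\
  (forall mu : seq nat, is_partition mu -> ~ strictly_reduces l mu) /\
  (forall mu : seq nat, is_partition mu -> equivalent l mu -> lexleq l mu).

From mathcomp Require Import all_boot all_order all_algebra.
From mathcomp Require Import zify.
Import Order.TTheory GRing.Theory Num.Theory.

(* Every partition (a, b, c) of length 3 strictly reduces to the partition
   (1, 1), so it is never novel.
   - If a >= b >= c >= 1 then c <> a + b, hence a sign vector x with
     a x1 + b x2 + c x3 = 0 cannot have x1 = x2: its first two signs are
     opposite, i.e. x1 + x2 = 0.  Projecting onto the first two coordinates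
     therefore maps (a, b, c)^{perp B} into (1, 1)^{perp B}, and (1, 1) itself
     lies in V_(1,1); this is the reduction (a, b, c) => (1, 1).
   - The converse reduction (1, 1) => (a, b, c) is impossible for length
     reasons, since a reduction never increases the length.
   - A novel partition strictly reduces to no partition, which concludes. *)

(* A reduction never targets a longer partition, so a reduction to a strictly
   shorter partition is automatically strict. *)
Lemma reduces_to_shorter_strict (mu l : seq nat) :
  (size l < size mu)%N -> reduces mu l -> strictly_reduces mu l.
Proof. by move=> lt_l_mu red_mu_l; split=> // -[]; rewrite leqNgt lt_l_mu. Qed.

Lemma strictly_reducible_not_novel (l mu : seq nat) :
  is_partition mu -> strictly_reduces l mu -> ~ novel l.
Proof. by move=> part_mu sred [_ [_ [irreducible _]]]; exact: irreducible sred. Qed.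

Lemma is_partition11 : is_partition [:: 1; 1]%N.
Proof. by []. Qed.

Lemma inV11 : inV [:: 1; 1]%N [:: Posz 1; Posz 1].
Proof.
exists [:: 1; 1]%N; split=> //.
by exists [:: true; true].
Qed.

(* Unless c = a + b, the first two signs of any x in (a, b, c)^{perp B} are
   opposite; then x1 + x2 = 0, i.e. Proj_{1,2} x lies in (1, 1)^{perp B}. *)
Lemma perp3_proj_perp11 (a b c : nat) (x : seq bool) :
  c != (a + b)%N -> perpB (lamZ [:: a; b; c]) x ->
  perpB [:: Posz 1; Posz 1] (mask [:: true; true; false] x).
Proof.
move=> /eqP c_neq_ab; case: x => [|x1 [|x2 [|x3 [|? ?]]]] //.
rewrite /perpB /=.
by case: x1; case: x2; case: x3 => /= /eqP dot0 //; apply/eqP; lia.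
Qed.

Lemma partition3_reduces11 (a b c : nat) :
  is_partition [:: a; b; c] -> reduces [:: a; b; c] [:: 1; 1]%N.
Proof.
move=> /andP[/= /and3P[ge_ab ge_bc _] /and4P[_ pos_b _ _]].
have c_neq_ab : c != (a + b)%N by apply/eqP; lia.
split=> //; exists [:: true; true; false]; split=> //; split=> //.
exists [:: Posz 1; Posz 1]; split; first exact: inV11.
by move=> x; exact: perp3_proj_perp11.
Qed.

Theorem mainTheorem7 (l : seq nat) :
  is_partition l -> size l = 3 -> ~ novel l.
Proof.
case: l => [|a [|b [|c [|? ?]]]] //= part_l _.
apply: (strictly_reducible_not_novel _ _ is_partition11).
by apply: reduces_to_shorter_strict => //; exact: partition3_reduces11.
Qed.
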